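(* Let $n\ge 2$. Let $\hat a_{i,i-1}>0$ and $\hat b_{i,i-1}\in\mathbb{R}$ for $2\le i\le n$, and for $1\le m\le k\le n$ put $\hat a_{k,m}:=\prod_{i=m+1}^{k}\hat a_{i,i-1}$ (so $\hat a_{k,k}=1$). Let $L_i\in\mathbb{R}$ ($2\le i\le n$) and $R_i\in\mathbb{R}$ ($1\le i\le n-1$) satisfy $L_i=\hat a_{i,i-1}R_{i-1}+\hat b_{i,i-1}$ for $2\le i\le n$, and $L_i\le R_i$ for $2\le i\le n-1$. Suppose $\prod_{i=1}^{j}\hat a_{n-(i-1),n-i}=\hat a_{n,n-j}\le 1$ for all $1\le j\le n-1$. Then for every $1\le j\le n-1$, $$\sum_{i=1}^{j}\bigl(L_{n-(i-1)}-R_{n-i}\bigr)\le(\hat a_{n,n-j}-1)\,R_{n-j}+\hat b_{n,n-1}+\sum_{i=n-j+1}^{n-1}\hat a_{n,i}\,\hat b_{i,i-1}.$$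
   Context: Setting: a timing packet traverses a chain of nodes $1,\ldots,n$; $L_i=\tau^{i,l}(t_{i,l})$ is the receive time-stamp of node $i$ and $R_i=\tau^{i,r}(t_{i,r})$ the send time-stamp of node $i$, generated by arbitrary ''left'' and ''right'' clocks. $\hat a_{i,i-1},\hat b_{i,i-1}$ are declared relative skews and offsets; $L_i=\hat a_{i,i-1}R_{i-1}+\hat b_{i,i-1}$ is the skew-consistency condition and $L_i\le R_i$ is causality. *)

From mathcomp Require Import all_boot all_order all_algebra.
Set Implicit Arguments. Unset Strict Implicit. Unset Printing Implicit Defensive.
Import Order.TTheory GRing.Theory Num.Theory.
Local Open Scope ring_scope.

(* a i stands for \hat a_{i,i-1} (2 <= i <= n).
   ahat a k m = \hat a_{k,m} = \prod_{i=m+1}^{k} \hat a_{i,i-1}. *)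
Definition ahat (R : pzRingType) (a : nat -> R) (k m : nat) : R :=
  \prod_(m.+1 <= i < k.+1) a i.

From mathcomp Require Import all_boot all_order all_algebra.
From mathcomp Require Import zify lra.
Set Implicit Arguments. Unset Strict Implicit. Unset Printing Implicit Defensive.
Import Order.TTheory GRing.Theory Num.Theory.
Local Open Scope ring_scope.

(* Going one node further back along the chain, the bound for j hops is
   weakened using causality at the new node: since \hat a_{n,m} <= 1, the term
   (\hat a_{n,m} - 1) R_m may be replaced by (\hat a_{n,m} - 1) L_m, and the
   skew-consistency relation for L_m then turns it into the bound for j + 1
   hops, the factor \hat a_{m,m-1} being absorbed into \hat a_{n,m-1}. *)

Lemma ahat_id (F : pzRingType) (a : nat -> F) (k : nat) : ahat a k k = 1.
Proof. by rewrite /ahat big_geq. Qed.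

Lemma ahat_recl (F : pzRingType) (a : nat -> F) (k m : nat) :
  (m < k)%N -> ahat a k m = a m.+1 * ahat a k m.+1.
Proof. by move=> lt_mk; rewrite /ahat big_ltn // ltnS. Qed.

Lemma skew_bound_step (F : realDomainType) (A c d Lm Rm Rp : F) :
  A <= 1 -> Lm <= Rm -> Lm = c * Rp + d ->
  (A - 1) * Rm + (Lm - Rp) <= (c * A - 1) * Rp + A * d.
Proof.
move=> A_le1 causal skew.
have weaken : (A - 1) * Rm <= (A - 1) * Lm by rewrite ler_wnM2l // subr_le0.
by apply: le_trans (lerD weaken (lexx _)) _; rewrite skew; lra.
Qed.

Theorem lemma2 (F : realFieldType) (n : nat) (a b L R : nat -> F) :
  (2 <= n)%N ->
  (forall i, (2 <= i <= n)%N -> 0 < a i) ->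
  (forall i, (2 <= i <= n)%N -> L i = a i * R i.-1 + b i) ->
  (forall i, (2 <= i <= n.-1)%N -> L i <= R i) ->
  (forall j, (1 <= j <= n.-1)%N -> ahat a n (n - j)%N <= 1) ->
  forall j, (1 <= j <= n.-1)%N ->
    \sum_(1 <= i < j.+1) (L (n - (i - 1))%N - R (n - i)%N)
      <= (ahat a n (n - j)%N - 1) * R (n - j)%N + b n
         + \sum_((n - j).+1 <= i < n) ahat a n i * b i.
Proof.
move=> n_ge2 _ skew causal ahat_le1.
elim=> [//|j IH] /andP[_ j_lt].
case: j IH j_lt => [|j] IH j_lt.
  have e : (n - 1).+1 = n by lia.
  rewrite big_nat1 subn0 e big_geq // ahat_recl ?e // ahat_id.
  by rewrite (skew n) ?n_ge2 ?leqnn // -subn1; lra.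
set m := (n - j.+2)%N.
have em : (n - j.+1)%N = m.+1 by rewrite /m; lia.
have m1_lt_n : (m.+1 < n)%N by rewrite -em; lia.
rewrite em in IH; have {}IH := IH (ltac:(lia)).
rewrite big_nat_recr // subSS subn0 em -/m.
rewrite (ahat_recl _ (ltnW m1_lt_n)) [in X in _ <= X]big_ltn //.
have := skew_bound_step (ahat_le1 j.+1 _) (causal m.+1 _) (skew m.+1 _).
rewrite em /=; move=> /(_ ltac:(lia) ltac:(lia) ltac:(lia)).
lra.
Qed.
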